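(* Let $S:\mathbb{R}^m\times\mathbb{R}^n\to\mathbb{R}^q$ be bilinear with lifted operator $\mathscr{S}$, let $\mathcal{K}'\subseteq\mathbb{R}^{m\times n}$, $\mathcal{M}=\mathcal{K}'-\mathcal{K}'$, and assume $\mathcal{N}(\mathscr{S},1)\cap\mathcal{M}=\{0\}$. Let $X\in\mathcal{N}(\mathscr{S},2)\cap\mathcal{M}\setminus\{0\}$ and $\delta\in(0,1)$. If $x\in\mathbb{R}^m$ has independent entries each with the symmetric Bernoulli distribution ($\Pr(x_i=1)=\Pr(x_i=-1)=1/2$), then $$\Pr\big(\|P_{\mathcal{C}(X)}x\|_2^2\ge(1-\delta)\|x\|_2^2\big)\le\exp\Big[-\tfrac{m(1-\delta)}{4}+\log4\Big].$$
   Context: For $j=1,\dots,q$ let $S_j$ be the unique matrix with $(S(x,y))_j=x^TS_jy$; the lifted operator is $(\mathscr{S}(W))_j=\operatorname{tr}(S_j^TW)$. $\mathcal{N}(\mathscr{S},k)=\{X:\operatorname{rank}(X)\le k,\ \mathscr{S}(X)=0\}$; $\mathcal{K}'-\mathcal{K}'=\{X_1-X_2:X_1,X_2\in\mathcal{K}'\}$. $\mathcal{C}(X)$ is the column space of $X$ and $P_{\mathcal{C}(X)}$ the orthogonal projection onto it. *)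

From HB Require Import structures.
From mathcomp Require Import all_boot all_order all_algebra.
From mathcomp Require Import reals.
From mathcomp.analysis Require Import sequences exp.
Set Implicit Arguments. Unset Strict Implicit. Unset Printing Implicit Defensive.
Import Order.TTheory GRing.Theory Num.Theory.
Local Open Scope ring_scope.

Section Defs.
Variable R : realType.

Definition bilinear_map m n q (S : 'cV[R]_m -> 'cV[R]_n -> 'cV[R]_q) : Prop :=
  (forall (a : R) x1 x2 y, S (a *: x1 + x2) y = a *: S x1 y + S x2 y) /\
  (forall (a : R) x y1 y2, S x (a *: y1 + y2) = a *: S x y1 + S x y2).

(* S_j : the unique matrix with (S(x,y))_j = x^T S_j y. *)
Definition Smat m n q (S : 'cV[R]_m -> 'cV[R]_n -> 'cV[R]_q) (j : 'I_q)
  : 'M[R]_(m, n) :=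
  \matrix_(a < m, b < n) (S (delta_mx a 0) (delta_mx b 0)) j 0.

Definition liftS m n q (S : 'cV[R]_m -> 'cV[R]_n -> 'cV[R]_q)
  (W : 'M[R]_(m, n)) : 'cV[R]_q :=
  \col_(j < q) \tr ((Smat S j)^T *m W).

Definition Nset m n q (S : 'cV[R]_m -> 'cV[R]_n -> 'cV[R]_q) (k : nat)
  (X : 'M[R]_(m, n)) : Prop :=
  (\rank X <= k)%N /\ liftS S X = 0.

Definition diffset m n (K : 'M[R]_(m, n) -> Prop) (X : 'M[R]_(m, n)) : Prop :=
  exists X1 X2, K X1 /\ K X2 /\ X = X1 - X2.

(* Orthogonal projection onto the column space C(X):
   with U a row basis of the row space of X^T (rows of U form a basis of C(X)),
   P = U^T (U U^T)^{-1} U. *)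
Definition colproj m n (X : 'M[R]_(m, n)) : 'M[R]_m :=
  let U := row_base (X^T) in (U^T *m invmx (U *m U^T)) *m U.

Definition sqnorm m (v : 'cV[R]_m) : R := \sum_(i < m) v i 0 ^+ 2.

Definition signvec m (s : {ffun 'I_m -> bool}) : 'cV[R]_m :=
  \col_(i < m) (if s i then 1 else -1).

(* Probability, for x with i.i.d. symmetric Bernoulli (+-1) entries,
   of the event E, i.e. (#{s in {+-1}^m | E s}) / 2^m. *)
Definition rademacher_prob m (E : 'cV[R]_m -> bool) : R :=
  #|[set s : {ffun 'I_m -> bool} | E (signvec s)]|%:R / (2 ^+ m).

End Defs.

(* Write the projection onto C(X) as W^T W with W an r x m matrix with
   orthonormal rows w_k, where r = rank X is 1 or 2 (only X != 0 and
   rank X <= 2 are used).  Then |P x|^2 = sum_k <w_k, x>^2, so on the event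
   some <w_k, x>^2 is at least t / r with t = (1 - delta) m.  For a unit
   vector w, cosh y <= exp (y^2 / 2) gives E exp (b <w, x>) <= exp (b^2 / 2),
   hence the Chernoff bound P(<w, x>^2 >= b^2) <= 2 exp (-b^2 / 2); a union
   bound over the r rows gives 2 r exp (-t / 2 r) <= 4 exp (-t / 4). *)

From HB Require Import structures.
From mathcomp Require Import all_boot all_order all_algebra.
From mathcomp Require Import all_classical all_reals all_analysis.
From mathcomp Require Import zify ring lra.
Set Implicit Arguments.
Unset Strict Implicit.
Unset Printing Implicit Defensive.
Import Order.TTheory GRing.Theory Num.Theory.
Local Open Scope ring_scope.

Lemma expn2_fact_le_fact_double j : (2 ^ j * j`! <= (j.*2)`!)%N.
Proof.
elim: j => [//|j IH]; rewrite doubleS !factS expnS.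
have le2 : (2 * j.+1 <= (j.*2).+2 * (j.*2).+1)%N by nia.
have := leq_mul le2 IH; rewrite -!mulnA (mulnCA j.+1) => le_fact.
by apply: leq_trans le_fact _; rewrite !mulnA.
Qed.

Section CoshBound.
Variable R : realType.
Implicit Types y : R.

Let cosh_coeff y k := exp_coeff y k + exp_coeff (- y) k.

Let cosh_coeff_odd y j : cosh_coeff y j.*2.+1 = 0.
Proof. by rewrite /cosh_coeff /exp_coeff /= !exprS -!mul2n !exprM sqrrN !mulNr addrN. Qed.

Let cosh_coeff_even y j : cosh_coeff y j.*2 = 2 * ((y ^+ 2) ^+ j / (j.*2)`!%:R).
Proof.
by rewrite /cosh_coeff /exp_coeff /= -!mul2n !exprM sqrrN mulr2n mulrDl !mul1r.
Qed.

Let cosh_coeff_ge0 y k : 0 <= cosh_coeff y k.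
Proof.
rewrite -(odd_double_half k); case: (odd k); first by rewrite add1n cosh_coeff_odd.
by rewrite add0n cosh_coeff_even mulr_ge0 // divr_ge0 // exprn_ge0 // sqr_ge0.
Qed.

(* Only the even coefficients survive, and [(2j)! >= 2^j j!] compares them
   termwise with those of [expR (y^2/2)]. *)
Let sum_cosh_coeff_le y n : \sum_(0 <= k < n) cosh_coeff y k <=
  2 * \sum_(0 <= k < n) exp_coeff (y ^+ 2 / 2) k.
Proof.
apply: (@le_trans _ _ (\sum_(0 <= k < n.*2) cosh_coeff y k)).
  rewrite -addnn (big_cat_nat _ (leq_addr n n)) //= lerDl.
  by apply: sumr_ge0 => k _; apply: cosh_coeff_ge0.
have -> : \sum_(0 <= k < n.*2) cosh_coeff y k =
    \sum_(0 <= j < n) 2 * ((y ^+ 2) ^+ j / (j.*2)`!%:R).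
  elim: n => [|n IH]; first by rewrite !big_geq.
  by rewrite doubleS !big_nat_recr //= IH cosh_coeff_odd addr0 cosh_coeff_even.
rewrite mulr_sumr; apply: ler_sum => j _.
rewrite ler_pM2l // /exp_coeff /= expr_div_n mulrAC -mulrA.
apply: ler_wpM2l; first by rewrite exprn_ge0 // sqr_ge0.
rewrite -invfM -natrX -natrM lef_pV2 ?posrE ?ltr0n ?muln_gt0 ?expn_gt0 ?fact_gt0 //.
by rewrite ler_nat mulnC expn2_fact_le_fact_double.
Qed.

Lemma expR_add_expRN_le y : expR y + expR (- y) <= 2 * expR (y ^+ 2 / 2).
Proof.
rewrite /expR -limD; [|exact: is_cvg_series_exp_coeff..].
apply: (@le_trans _ _ (limn (2 *: series (exp_coeff (y ^+ 2 / 2))))).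
  apply: ler_lim.
  - by apply: is_cvgD; apply: is_cvg_series_exp_coeff.
  - by apply: is_cvgZl_tmp; apply: is_cvg_series_exp_coeff.
  apply: nearW => n; rewrite /= !fctE /series /= -big_split /=.
  exact: sum_cosh_coeff_le.
by rewrite limZl_tmp //; exact: is_cvg_series_exp_coeff.
Qed.

End CoshBound.

Section SquaredNorm.
Variable R : realType.

Lemma sqnormE m (v : 'cV[R]_m) : sqnorm v = (v^T *m v) 0 0.
Proof. by rewrite /sqnorm mxE; apply: eq_bigr => i _; rewrite mxE expr2. Qed.

Lemma sqnorm_gt0 m (v : 'cV[R]_m) : v != 0 -> 0 < sqnorm v.
Proof.
move=> v0; rewrite lt_def sumr_ge0 ?andbT => [|i _]; last exact: sqr_ge0.
apply: contra v0 => /eqP/psumr_eq0P v2_eq0; apply/eqP/colP => i.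
by have /eqP := v2_eq0 (fun i _ => sqr_ge0 (v i 0)) i isT; rewrite sqrf_eq0 mxE => /eqP.
Qed.

Lemma sqnormZ m (a : R) (v : 'cV[R]_m) : sqnorm (a *: v) = a ^+ 2 * sqnorm v.
Proof. by rewrite /sqnorm mulr_sumr; apply: eq_bigr => i _; rewrite mxE exprMn. Qed.

Lemma mulmx_row_trmx m (v : 'rV[R]_m) : v *m v^T = (sqnorm v^T)%:M.
Proof. by rewrite sqnormE trmxK [LHS]mx11_scalar. Qed.

Lemma sqnorm_signvec m (s : {ffun 'I_m -> bool}) : sqnorm (signvec R s) = m%:R.
Proof.
rewrite /sqnorm (eq_bigr (fun _ => 1)) ?sumr_const ?card_ord // => i _.
by rewrite mxE; case: (s i); rewrite ?sqrrN expr1n.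
Qed.

Lemma sqnorm_tr_orthonormal r m (W : 'M[R]_(r, m)) (y : 'cV[R]_r) :
  W *m W^T = 1%:M -> sqnorm (W^T *m y) = sqnorm y.
Proof. by move=> oW; rewrite !sqnormE trmx_mul trmxK -mulmxA (mulmxA W) oW mul1mx. Qed.

Lemma sqnorm_row_orthonormal r m (W : 'M[R]_(r, m)) k :
  W *m W^T = 1%:M -> sqnorm (row k W)^T = 1.
Proof.
move=> oW; have := congr1 (fun M : 'M[R]_r => M k k) oW.
rewrite !mxE eqxx mulr1n => <-; rewrite sqnormE trmxK !mxE.
by apply: eq_bigr => j _; rewrite !mxE.
Qed.

End SquaredNorm.

Section Orthonormalization.
Variable R : realType.

Lemma normalize_row m (v : 'rV[R]_m) : v != 0 ->
  exists2 a : R, a != 0 & (a^-1 *: v) *m (a^-1 *: v)^T = 1%:M.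
Proof.
move=> v0; set s := sqnorm v^T; set a := Num.sqrt s.
have a_gt0 : 0 < a by rewrite sqrtr_gt0 sqnorm_gt0 // trmx_eq0.
have sE : s = a ^+ 2 by rewrite sqr_sqrtr // ltW // -sqrtr_gt0.
exists a; first by rewrite gt_eqF.
rewrite linearZ /= -scalemxAl -scalemxAr scalerA mulmx_row_trmx -/s sE.
by rewrite scale_scalar_mx; congr (_%:M); field; rewrite gt_eqF.
Qed.

Lemma row_free_dsubmx m1 m2 n (U : 'M[R]_(m1 + m2, n)) :
  row_free U -> row_free (dsubmx U).
Proof.
move=> fU; apply/inj_row_free => v vU0.
have : row_mx 0 v *m U = 0 *m U.
  by rewrite -[U in LHS]vsubmxK mul_row_col vU0 !mul0mx addr0.
by move/(row_free_inj fU)/eqP; rewrite row_mx_eq0 => /andP[_ /eqP].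
Qed.

Lemma gram_schmidt_step r m (W : 'M[R]_(r, m)) (u : 'rV[R]_m) :
  W *m W^T = 1%:M -> ~~ (u <= W)%MS ->
  exists a c (w : 'rV[R]_m),
    [/\ a != 0, w *m w^T = 1%:M, w *m W^T = 0 & u = a *: w + c *m W].
Proof.
move=> oW uW; set c := u *m W^T; set v := u - c *m W.
have v0 : v != 0.
  by apply: contra uW => /eqP/subr0_eq ->; rewrite submxMl.
have vW : v *m W^T = 0 by rewrite mulmxBl -mulmxA oW mulmx1 subrr.
have [a a0 ow] := normalize_row v0.
exists a, c, (a^-1 *: v); split=> //.
  by rewrite -scalemxAl vW scaler0.
by rewrite scalerA mulfV // scale1r subrK.
Qed.

Lemma row_free_orthonormal_factor r m (U : 'M[R]_(r, m)) : row_free U ->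
  exists (W : 'M[R]_(r, m)) (A : 'M[R]_r),
    [/\ W *m W^T = 1%:M, A \in unitmx & U = A *m W].
Proof.
elim: r U => [|r IH] U fU.
  by exists 0, 1%:M; split; [apply/matrixP => -[] | exact: unitmx1 |
                             apply/matrixP => -[]].
pose U1 : 'M[R]_(1 + r, m) := U; set u := usubmx U1; set U' := dsubmx U1.
have eU : U = col_mx u U' by rewrite vsubmxK.
have [W' [A' [oW' uA' eU']]] := IH U' (row_free_dsubmx (U := U1) fU).
rewrite eU in fU *.
have uW' : ~~ (u <= W')%MS.
  apply: contraL fU => uW'.
  have uU' : (u <= U')%MS by rewrite eU' eqmxMfull ?row_full_unit.
  have sU' : (col_mx u U' <= U')%MS by rewrite col_mx_sub uU' submx_refl.
  by rewrite /row_free neq_ltn ltnS (leq_trans (mxrankS sU')) ?rank_leq_row.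
have [a [c [w [a0 ow wW' eu]]]] := gram_schmidt_step oW' uW'.
have W'w : W' *m w^T = 0 by rewrite -[LHS]trmxK trmx_mul trmxK wW' trmx0.
have oW : (col_mx w W' : 'M[R]_(1 + r, m)) *m (col_mx w W')^T = 1%:M.
  by rewrite tr_col_mx mul_col_row ow wW' W'w oW' -scalar_mx_block.
have uA : (block_mx a%:M c 0 A' : 'M[R]_(1 + r)) \in unitmx.
  by rewrite unitmxE det_ublock unitrM -(unitmxE A') uA' andbT det_scalar1 unitfE.
have eAW : col_mx u U' = (block_mx a%:M c 0 A' : 'M[R]_(1 + r)) *m col_mx w W'.
  by rewrite mul_block_col mul0mx add0r -eU' mul_scalar_mx -eu.
by exists (col_mx w W'), (block_mx a%:M c 0 A').
Qed.

Lemma orthonormal_factor_proj r m (A : 'M[R]_r) (W : 'M[R]_(r, m)) :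
  W *m W^T = 1%:M -> A \in unitmx ->
  (A *m W)^T *m invmx (A *m W *m (A *m W)^T) *m (A *m W) = W^T *m W.
Proof.
move=> oW uA.
have -> : A *m W *m (A *m W)^T = A *m A^T.
  by rewrite trmx_mul mulmxA -(mulmxA A) oW mulmx1.
have uAAt : A *m A^T \in unitmx by rewrite unitmx_mul unitmx_tr uA.
have AtGA : A^T *m invmx (A *m A^T) *m A = 1%:M.
  have AAtGA : A *m (A^T *m invmx (A *m A^T) *m A) = A.
    by rewrite !mulmxA mulmxV // mul1mx.
  by rewrite -[LHS](mulKmx uA) AAtGA mulVmx.
by rewrite trmx_mul !mulmxA -!(mulmxA W^T) AtGA mul1mx.
Qed.

Lemma colproj_orthonormal m n (X : 'M[R]_(m, n)) :
  exists W : 'M[R]_(\rank X^T, m), W *m W^T = 1%:M /\ colproj X = W^T *m W.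
Proof.
have [W [A [oW uA eU]]] := row_free_orthonormal_factor (row_base_free X^T).
by exists W; split=> //; rewrite /colproj eU orthonormal_factor_proj.
Qed.

End Orthonormalization.

Section RademacherTail.
Variable R : realType.

Lemma sqnorm_le_max_coord r (y : 'cV[R]_r) (t : R) : (0 < r)%N ->
  t <= sqnorm y -> exists k, t <= r%:R * y k 0 ^+ 2.
Proof.
move=> r_gt0 ty.
have [k _ kmax] := arg_maxP (fun k => y k 0 ^+ 2) (isT : predT (Ordinal r_gt0)).
exists k; apply: (le_trans ty).
apply: (le_trans (ler_sum _ (fun j _ => kmax j isT))).
by rewrite sumr_const card_ord mulr_natl.
Qed.

Lemma eq_rademacher_prob m (E F : 'cV[R]_m -> bool) :
  (forall s, E (signvec R s) = F (signvec R s)) ->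
  rademacher_prob E = rademacher_prob F.
Proof.
move=> EF; rewrite /rademacher_prob; congr (_%:R / _).
by apply: eq_card => s; rewrite !inE EF.
Qed.

Lemma rademacher_prob_le_mean m (E : 'cV[R]_m -> bool) (F : {ffun 'I_m -> bool} -> R) :
  (forall s, 0 <= F s) -> (forall s, E (signvec R s) -> 1 <= F s) ->
  rademacher_prob E <= (\sum_s F s) / 2 ^+ m.
Proof.
move=> F_ge0 EF; rewrite /rademacher_prob ler_pM2r ?invr_gt0 ?exprn_gt0 //.
rewrite -sum1_card natr_sum big_mkcond /=; apply: ler_sum => s _.
by rewrite inE; case: ifP => [/EF|_]; rewrite ?F_ge0.
Qed.

Lemma sum_expR_rademacher m (u : 'rV[R]_m) :
  \sum_(s : {ffun 'I_m -> bool}) expR ((u *m signvec R s) 0 0)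
    <= 2 ^+ m * expR (sqnorm u^T / 2).
Proof.
have -> : \sum_(s : {ffun 'I_m -> bool}) expR ((u *m signvec R s) 0 0) =
    \prod_i \sum_(b : bool) expR (u 0 i * (if b then 1 else -1)).
  rewrite bigA_distr_bigA; apply: eq_bigr => s _.
  by rewrite mxE expR_sum; apply: eq_bigr => i _; rewrite mxE.
apply: (@le_trans _ _ (\prod_i (2 * expR (u 0 i ^+ 2 / 2)))).
  apply: ler_prod => i _; rewrite big_bool /= mulr1 mulrN1 addr_ge0 ?expR_ge0 //=.
  exact: expR_add_expRN_le.
have -> : sqnorm u^T = \sum_i u 0 i ^+ 2 by apply: eq_bigr => i _; rewrite mxE.
by rewrite big_split /= prodr_const card_ord -expR_sum mulr_suml.
Qed.

Lemma sum_expR_rademacher_shift m (w : 'rV[R]_m) (b : R) : sqnorm w^T = 1 ->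
  \sum_(s : {ffun 'I_m -> bool}) expR (b * (w *m signvec R s) 0 0 - b ^+ 2)
    <= 2 ^+ m * expR (- (b ^+ 2 / 2)).
Proof.
move=> w1.
rewrite (eq_bigr (fun s => expR (- b ^+ 2) * expR (((b *: w) *m signvec R s) 0 0)));
  last by move=> s _; rewrite -scalemxAl -expRD addrC [in RHS]mxE.
rewrite -mulr_sumr (le_trans (ler_wpM2l (expR_ge0 _) (sum_expR_rademacher _))) //.
rewrite [(b *: w)^T]linearZ /= sqnormZ w1 mulr1 mulrCA -expRD.
by rewrite ler_wpM2l ?exprn_ge0 // ler_expR; lra.
Qed.

Lemma one_le_expR_shift (b z : R) : b ^+ 2 <= z ^+ 2 ->
  1 <= expR (b * z - b ^+ 2) + expR (- b * z - b ^+ 2).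
Proof.
move=> bz; rewrite -expR0; case: (leP 0 (b * z)) => [bz_ge0|bz_lt0].
  apply: (@le_trans _ _ (expR (b * z - b ^+ 2))); last by rewrite lerDl expR_ge0.
  by rewrite ler_expR; nra.
apply: (@le_trans _ _ (expR (- b * z - b ^+ 2))); last by rewrite lerDr expR_ge0.
by rewrite ler_expR; nra.
Qed.

Lemma rademacher_prob_sqnorm_ge r m (W : 'M[R]_(r, m)) (t : R) :
  (0 < r)%N -> W *m W^T = 1%:M -> 0 <= t ->
  rademacher_prob (fun x => t <= sqnorm (W *m x))
    <= (2 * r)%:R * expR (- (t / (2 * r%:R))).
Proof.
move=> r_gt0 oW t_ge0; have r0 : r%:R != 0 :> R by rewrite pnatr_eq0 -lt0n.
set b := Num.sqrt (t / r%:R).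
have bb : b ^+ 2 = t / r%:R by rewrite sqr_sqrtr // divr_ge0.
pose z k (s : {ffun 'I_m -> bool}) := (row k W *m signvec R s) 0 0.
pose F s := \sum_k (expR (b * z k s - b ^+ 2) + expR (- b * z k s - b ^+ 2)).
have F_ge0 s : 0 <= F s by apply: sumr_ge0 => k _; rewrite addr_ge0 ?expR_ge0.
have F_ge1 s : t <= sqnorm (W *m signvec R s) -> 1 <= F s.
  move=> /(sqnorm_le_max_coord r_gt0) [k tk]; rewrite /F (bigD1 k) //=.
  rewrite -[1]addr0; apply: lerD; last first.
    by apply: sumr_ge0 => j _; rewrite addr_ge0 ?expR_ge0.
  apply: one_le_expR_shift; rewrite bb ler_pdivrMr ?ltr0n // mulrC.
  by rewrite /z -row_mul mxE.
have sum_tail k :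
    \sum_s (expR (b * z k s - b ^+ 2) + expR (- b * z k s - b ^+ 2))
      <= 2 * (2 ^+ m * expR (- (t / (2 * r%:R)))).
  have -> : t / (2 * r%:R) = b ^+ 2 / 2 by rewrite bb; field.
  have wk := sqnorm_row_orthonormal k oW.
  rewrite big_split /= mulr2n mulrDl mul1r; apply: lerD.
    exact: sum_expR_rademacher_shift.
  by rewrite -(sqrrN b); exact: sum_expR_rademacher_shift.
apply: (le_trans (rademacher_prob_le_mean F_ge0 F_ge1)).
rewrite ler_pdivrMr ?exprn_gt0 // /F exchange_big /=.
apply: (le_trans (ler_sum _ (fun k _ => sum_tail k))).
rewrite sumr_const card_ord -mulr_natl natrM.
by rewrite le_eqVlt; apply/orP; left; apply/eqP; ring.
Qed.

End RademacherTail.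

Theorem lemma4 (R : realType) (m n q : nat)
  (S : 'cV[R]_m -> 'cV[R]_n -> 'cV[R]_q) (K : 'M[R]_(m, n) -> Prop)
  (X : 'M[R]_(m, n)) (delta : R) :
  bilinear_map S ->
  (forall Y : 'M[R]_(m, n), (Nset S 1 Y /\ diffset K Y) <-> Y = 0) ->
  Nset S 2 X -> diffset K X -> X != 0 ->
  0 < delta < 1 ->
  rademacher_prob
    (fun x : 'cV[R]_m => (1 - delta) * sqnorm x <= sqnorm (colproj X *m x))
  <= expR (- ((m%:R * (1 - delta)) / 4) + ln 4).
Proof.
move=> _ _ [rkX _] _ X0 /andP[d_gt0 d_lt1].
have [W [oW ->]] := colproj_orthonormal X.
have r_gt0 : (0 < \rank X^T)%N by rewrite mxrank_tr lt0n mxrank_eq0.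
have r_le2 : (\rank X^T <= 2)%N by rewrite mxrank_tr.
set t := m%:R * (1 - delta).
have t_ge0 : 0 <= t by rewrite mulr_ge0 // subr_ge0 ltW.
rewrite (@eq_rademacher_prob _ _ _ (fun x => t <= sqnorm (W *m x))); last first.
  by move=> s; rewrite sqnorm_signvec -mulmxA sqnorm_tr_orthonormal // mulrC.
apply: (le_trans (rademacher_prob_sqnorm_ge r_gt0 oW t_ge0)).
rewrite expRD lnK ?posrE // mulrC.
move: (\rank X^T) r_gt0 r_le2 => [|[|[|//]]] // _ _.
  rewrite ler_pM ?expR_ge0 ?ler_expR //; lra.
by rewrite -natrM mulrC.
Qed.
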